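(* Let $a,n,r\in\mathbb{N}$ (so $r\ge1$), $k_1,\ldots,k_n\in\mathbb{N}$, and let $f_1,\ldots,f_n$ be arbitrary arithmetic functions. Then $$\frac{1}{K^{ar}}\sum_{j=1}^{K^a} j^r\prod_{i=1}^n\Bigl(\sum_{d_i|k_i,\ d_i^a|j}(f_i*\mu)(d_i)\Bigr)=\frac12\prod_{i=1}^n f_i(k_i)+\frac{1}{r+1}\sum_{m=0}^{\lfloor r/2\rfloor}\binom{r+1}{2m}\frac{B_{2m}}{K^{a(2m-1)}}\sum_{d_1|k_1,\ldots,d_n|k_n}\bigl(\operatorname{lcm}(d_1,\ldots,d_n)\bigr)^{a(2m-1)}\prod_{i=1}^n (f_i*\mu)(d_i).$$
   Context: An arithmetic function is a map $\mathbb{N}\to\mathbb{C}$; $\mu$ is the Möbius function and $(f*g)(n)=\sum_{d|n}f(d)g(n/d)$ the Dirichlet convolution. $K=\operatorname{lcm}(k_1,\ldots,k_n)$. The Bernoulli numbers $B_m$ are defined by $\frac{t}{e^t-1}=\sum_{m\ge0}B_m\frac{t^m}{m!}$. *)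

From HB Require Import structures.
From mathcomp Require Import all_boot all_order all_algebra.
Set Implicit Arguments. Unset Strict Implicit. Unset Printing Implicit Defensive.
Import Order.TTheory GRing.Theory Num.Theory.
Local Open Scope ring_scope.

(* Möbius function on positive integers (value 0 at n = 0, irrelevant). *)
Definition moebius (C : nzRingType) (n : nat) : C :=
  if (0 < n)%N && all (fun p => logn p n == 1%N) (primes n)
  then (-1) ^+ size (primes n) else 0.

Definition dconv (C : nzRingType) (f g : nat -> C) (n : nat) : C :=
  \sum_(d <- divisors n) f d * g (n %/ d)%N.

(* Bernoulli numbers with t/(e^t-1) = sum B_m t^m/m!, i.e. B_0 = 1 and
   sum_{k=0}^{m} C(m+1,k) B_k = 0 for m >= 1 (so B_1 = -1/2). *)
Definition bern_next (s : seq rat) : rat :=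
  let m := size s in
  if m == 0%N then 1
  else - (m.+1%:R)^-1 * \sum_(k < m) ('C(m.+1, k))%:R * nth 0 s k.

Fixpoint bern_seq (n : nat) : seq rat :=
  match n with
  | 0 => [::]
  | n'.+1 => rcons (bern_seq n') (bern_next (bern_seq n'))
  end.

Definition bernoulli (m : nat) : rat := nth 0 (bern_seq m.+1) m.

Definition lcm_fam (n : nat) (k : 'I_n -> nat) : nat := \big[lcmn/1%N]_(i < n) k i.

From mathcomp Require Import all_boot all_order all_algebra.
From mathcomp Require Import zify ring.
Import Order.TTheory GRing.Theory Num.Theory.

Set Implicit Arguments.
Unset Strict Implicit.
Unset Printing Implicit Defensive.

(* Expanding the product over i, the j-th summand becomes a sum over tuples d with d_i | k_i of
   [lcm(d)^a | j] * prod_i (f_i * mu)(d_i).  After exchanging the sums, a tuple d with L = lcm(d)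
   only sees the multiples j = L^a t, 0 <= t <= N := (K/L)^a, so it contributes
   L^(ar) * sum_(t <= N) t^r, which Faulhaber's formula evaluates.  The leading term N^r/2 of that
   formula, summed over all d, gives (1/2) prod_i f_i(k_i) by Moebius inversion. *)

Lemma gcdn_exp2r x y a : gcdn (x ^ a) (y ^ a) = gcdn x y ^ a.
Proof.
have [|g_gt0] := posnP (gcdn x y).
  move/eqP; rewrite eqn0Ngt gcdn_gt0 negb_or -!eqn0Ngt => /andP[/eqP-> /eqP->].
  by rewrite !gcdnn.
have ex := divnK (dvdn_gcdl x y); have ey := divnK (dvdn_gcdr x y).
set g := gcdn x y in g_gt0 ex ey *.
have cop : coprime (x %/ g) (y %/ g).
  by rewrite /coprime -(eqn_pmul2r g_gt0) muln_gcdl ex ey mul1n.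
by rewrite -ex -ey !expnMn -muln_gcdl (eqP (coprimeXl a (coprimeXr a cop))) mul1n.
Qed.

Lemma lcmn_exp2r x y a : lcmn (x ^ a) (y ^ a) = lcmn x y ^ a.
Proof.
have [|g_gt0] := posnP (gcdn x y).
  move/eqP; rewrite eqn0Ngt gcdn_gt0 negb_or -!eqn0Ngt => /andP[/eqP-> /eqP->].
  by case: a => [|a] //; rewrite !exp0n.
apply/eqP; rewrite -(@eqn_pmul2r (gcdn x y ^ a)) ?expn_gt0 ?g_gt0 //.
by rewrite -{1}gcdn_exp2r !muln_lcm_gcd -expnMn -muln_lcm_gcd expnMn.
Qed.

Lemma lcm_fam_exp n (F : 'I_n -> nat) a : lcm_fam F ^ a = lcm_fam (fun i => F i ^ a).
Proof. by apply: (big_morph (fun x => x ^ a)) => [x y|]; rewrite ?lcmn_exp2r ?exp1n. Qed.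

Lemma dvdn_lcm_fam n (F : 'I_n -> nat) m : (lcm_fam F %| m) = [forall i, F i %| m].
Proof. by apply/dvdn_biglcmP/forallP => dvdFm i //; apply: dvdFm. Qed.

Lemma lcm_fam_gt0 n (F : 'I_n -> nat) : (forall i, 0 < F i) -> 0 < lcm_fam F.
Proof.
by move=> F_gt0; apply: (big_ind (fun m => 0 < m)) => // x y x_gt0 y_gt0; rewrite lcmn_gt0 x_gt0.
Qed.

Lemma dvdn_lcm_fam_l n (F : 'I_n -> nat) i : F i %| lcm_fam F.
Proof. by move: (dvdnn (lcm_fam F)); rewrite {1}dvdn_lcm_fam => /forallP. Qed.

Lemma lcm_fam_dvd n (F G : 'I_n -> nat) : (forall i, F i %| G i) -> lcm_fam F %| lcm_fam G.
Proof.
move=> dvdFG; rewrite dvdn_lcm_fam; apply/forallP => i.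
exact: dvdn_trans (dvdFG i) (dvdn_lcm_fam_l G i).
Qed.

Lemma bin_mul_subC n m j : j <= n -> 'C(n, m) * 'C(n - m, j) = 'C(n, j) * 'C(n - j, m).
Proof.
move=> le_jn; have [le_mn|lt_nm] := leqP m (n - j); last first.
  rewrite (@bin_small (n - j) m) // muln0.
  by have [le_mn|/bin_small->//] := leqP m n; rewrite (@bin_small (n - m)) ?muln0 //; lia.
have fact_gt0 : 0 < m`! * j`! * (n - m - j)`! by rewrite !muln_gt0 !fact_gt0.
apply/eqP; rewrite -(eqn_pmul2r fact_gt0); apply/eqP.
transitivity n`!.
  rewrite -(@bin_fact n m) 1?(leq_trans le_mn) ?leq_subr //.
  by rewrite -(@bin_fact (n - m) j); [ring | lia].
rewrite -(bin_fact le_jn) -(@bin_fact (n - j) m) // (_ : n - j - m = n - m - j); [ring | lia].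
Qed.

Local Open Scope ring_scope.

Section DivisorSums.
Variable R : nmodType.
Implicit Type F : nat -> R.

Lemma eq_big_divisors m1 m2 (P1 P2 : pred nat) F : (0 < m1)%N -> (0 < m2)%N ->
  (forall d, (d %| m1)%N && P1 d = (d %| m2)%N && P2 d) ->
  \sum_(d <- divisors m1 | P1 d) F d = \sum_(d <- divisors m2 | P2 d) F d.
Proof.
move=> m1_gt0 m2_gt0 eqP12; rewrite -[LHS]big_filter -[RHS]big_filter; apply: perm_big.
apply: uniq_perm; rewrite ?filter_uniq ?divisors_uniq // => d.
by rewrite !mem_filter -!dvdn_divisors // [P1 _ && _]andbC [P2 _ && _]andbC eqP12.
Qed.

Lemma big_divisors_mul p m F : (0 < p)%N -> (0 < m)%N ->
  \sum_(d <- divisors (p * m) | (p %| d)%N) F d = \sum_(t <- divisors m) F (p * t)%N.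
Proof.
move=> p_gt0 m_gt0; have mulpI : injective (muln p).
  by move=> x y /eqP; rewrite eqn_pmul2l // => /eqP.
rewrite -big_filter -(big_map (muln p) xpredT); apply: perm_big.
apply: uniq_perm; rewrite ?filter_uniq ?(map_inj_uniq mulpI) ?divisors_uniq // => d.
rewrite mem_filter -dvdn_divisors ?muln_gt0 ?p_gt0 //.
apply/andP/mapP => [[/dvdnP[t ->]]|[t t_dvd ->]].
  by rewrite mulnC dvdn_pmul2l // => t_dvd; exists t; rewrite -?dvdn_divisors.
by rewrite dvdn_mulr // dvdn_pmul2l // dvdn_divisors.
Qed.

Lemma big_divisors_nat m B (P : pred nat) F : (0 < m < B)%N ->
  \sum_(d <- divisors m | P d) F d = \sum_(0 <= d < B | (d %| m)%N && P d) F d.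
Proof.
case/andP=> m_gt0 lt_mB; rewrite -[LHS]big_filter -[RHS]big_filter; apply: perm_big.
apply: uniq_perm; rewrite ?filter_uniq ?divisors_uniq ?iota_uniq // => d.
rewrite !mem_filter -dvdn_divisors // mem_index_iota /= andbC.
case: (boolP (d %| m)%N) => //= d_dvd.
by rewrite (leq_ltn_trans (dvdn_leq m_gt0 d_dvd)) ?andbT.
Qed.

Lemma big_nat_dvdn q n F : (0 < q)%N ->
  \sum_(0 <= j < n.+1 | (q %| j)%N) F j = \sum_(0 <= t < (n %/ q).+1) F (q * t)%N.
Proof.
move=> q_gt0; have mulqI : injective (muln q).
  by move=> x y /eqP; rewrite eqn_pmul2l // => /eqP.
rewrite -big_filter -(big_map (muln q) xpredT); apply: perm_big.
apply: uniq_perm; rewrite ?filter_uniq ?(map_inj_uniq mulqI) ?iota_uniq // => j.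
rewrite mem_filter mem_index_iota.
apply/andP/mapP => [[/dvdnP[t ->] t_lt]|[t t_in ->]].
  exists t; last by rewrite mulnC.
  by move: t_lt; rewrite mem_index_iota /= !ltnS leq_divRL.
move: t_in; rewrite mem_index_iota /= !ltnS leq_divRL // => t_le.
by rewrite dvdn_mulr // mulnC.
Qed.

End DivisorSums.

Section Moebius.
Variable R : nzRingType.

Lemma moebius_primeM p m : prime p -> (0 < m)%N ->
  moebius R (p * m) = if (p %| m)%N then 0 else - moebius R m.
Proof.
move=> p_pr m_gt0; have p_gt0 := prime_gt0 p_pr.
have pm_gt0 : (0 < p * m)%N by rewrite muln_gt0 p_gt0.
have lognpm : logn p (p * m) = (logn p m).+1 by rewrite lognM // logn_prime // eqxx.
rewrite /moebius pm_gt0 m_gt0 /=; have [p_dvd_m|p_ndvd_m] := boolP (p %| m)%N.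
  rewrite ifF //; apply/negbTE/allPn; exists p; first by rewrite mem_primes p_pr pm_gt0 dvdn_mulr.
  by rewrite lognpm eqSS -lt0n logn_gt0 mem_primes p_pr m_gt0 p_dvd_m.
have p_primes : p \notin primes m by rewrite mem_primes p_pr m_gt0 (negbTE p_ndvd_m).
have primes_pm : perm_eq (primes (p * m)) (p :: primes m).
  apply: uniq_perm; rewrite /= ?p_primes ?primes_uniq // => q.
  by rewrite primesM // primes_prime // !inE.
rewrite (perm_all _ primes_pm) (perm_size primes_pm) /= lognpm.
rewrite (_ : logn p m = 0%N) ?eqxx /=; last by apply/eqP; rewrite -leqn0 leqNgt logn_gt0.
rewrite (@eq_in_all _ _ (fun q => logn q m == 1%N)) => [|q q_primes]; last first.
  rewrite lognM // logn_prime //; suff /negbTE-> : q != p by [].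
  by apply: contraNneq p_primes => <-.
by case: ifP; rewrite ?oppr0 // exprS mulN1r.
Qed.

Lemma sum_moebius_divisors m : (0 < m)%N ->
  \sum_(d <- divisors m) moebius R d = (m == 1%N)%:R.
Proof.
move=> m_gt0; have [m_le1|m_gt1] := leqP m 1.
  have -> : m = 1%N by apply/eqP; rewrite eqn_leq m_le1.
  by rewrite (_ : divisors 1 = [:: 1%N]) ?big_seq1.
rewrite gtn_eqF //; set p := pdiv m; have p_pr : prime p := pdiv_prime m_gt1.
have p_gt0 := prime_gt0 p_pr.
have [m' m'_gt0 ->] : exists2 m', (0 < m')%N & m = (p * m')%N.
  exists (m %/ p)%N; last by rewrite mulnC divnK // pdiv_dvd.
  by rewrite divn_gt0 // dvdn_leq // pdiv_dvd.
have sum_ndvd : \sum_(d <- divisors (p * m') | ~~ (p %| d)%N) moebius R d =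
                \sum_(t <- divisors m' | ~~ (p %| t)%N) moebius R t.
  apply: eq_big_divisors; rewrite ?muln_gt0 ?p_gt0 // => d.
  have [_|p_ndvd_d] := boolP (p %| d)%N; rewrite /= ?andbF ?andbT //.
  by rewrite Gauss_dvdr // coprime_sym prime_coprime.
have sum_dvd : \sum_(d <- divisors (p * m') | (p %| d)%N) moebius R d =
               - \sum_(t <- divisors m' | ~~ (p %| t)%N) moebius R t.
  rewrite big_divisors_mul // -sumrN [RHS]big_mkcond /=; apply: eq_big_seq => t.
  rewrite -dvdn_divisors // => t_dvd; rewrite moebius_primeM ?(dvdn_gt0 m'_gt0 t_dvd) //.
  by case: ifP; rewrite ?oppr0.
by rewrite (bigID (dvdn p)) /= sum_dvd sum_ndvd addNr.
Qed.

Lemma moebius_inversion (f : nat -> R) k : (0 < k)%N ->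
  \sum_(d <- divisors k) dconv f (@moebius R) d = f k.
Proof.
move=> k_gt0.
have dconvE d : d \in divisors k ->
    dconv f (@moebius R) d = \sum_(e <- divisors k | (e %| d)%N) f e * moebius R (d %/ e)%N.
  rewrite -dvdn_divisors // => d_dvd; apply: eq_big_divisors => [||e].
  - exact: dvdn_gt0 k_gt0 d_dvd.
  - exact: k_gt0.
  by rewrite andbT andb_idl // => /dvdn_trans; apply.
have inner e : e \in divisors k ->
    \sum_(d <- divisors k | (e %| d)%N) f e * moebius R (d %/ e)%N = f e * (k %/ e == 1)%N%:R.
  rewrite -dvdn_divisors // => e_dvd; have e_gt0 := dvdn_gt0 k_gt0 e_dvd.
  have ke_gt0 : (0 < k %/ e)%N by rewrite divn_gt0 // dvdn_leq.
  rewrite -{1}(divnK e_dvd) (mulnC (k %/ e)%N) big_divisors_mul // -big_distrr.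
  by rewrite -sum_moebius_divisors //; congr (_ * _); apply: eq_bigr => t _; rewrite mulKn.
rewrite (eq_big_seq _ dconvE) (exchange_big_dep xpredT) //= (eq_big_seq _ inner).
rewrite (big_rem k) ?divisors_id //= divnn k_gt0 eqxx mulr1 big1_seq ?addr0 // => e.
rewrite mem_rem_uniq ?divisors_uniq // inE -dvdn_divisors // => /andP[_ /andP[e_neq_k e_dvd]].
case: eqP => [ke1|]; last by rewrite mulr0.
by move: e_neq_k; rewrite -(divnK e_dvd) ke1 mul1n eqxx.
Qed.

End Moebius.

Lemma prod_sum_divisors (R : comPzSemiRingType) n B (k : 'I_n -> nat)
    (Q : 'I_n -> pred nat) (G : 'I_n -> nat -> R) :
  (forall i, 0 < k i <= B)%N ->
  \prod_(i < n) \sum_(d <- divisors (k i) | Q i d) G i d =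
  \sum_(d : {ffun 'I_n -> 'I_B.+1} | [forall i, (d i %| k i)%N && Q i (d i)])
     \prod_(i < n) G i (d i).
Proof.
move=> k_bounded.
have toOrd i : \sum_(d <- divisors (k i) | Q i d) G i d =
               \sum_(d : 'I_B.+1 | (d %| k i)%N && Q i d) G i d.
  by rewrite (@big_divisors_nat _ _ B.+1) ?ltnS ?k_bounded // big_mkord.
rewrite (eq_bigr _ (fun i _ => toOrd i)) bigA_distr_big_dep; apply: eq_bigl => d.
by apply/familyP/forallP.
Qed.

Lemma prod_moebius_inversion (R : comNzRingType) n B (k : 'I_n -> nat)
    (f : 'I_n -> nat -> R) :
  (forall i, 0 < k i <= B)%N ->
  \prod_(i < n) f i (k i) =
  \sum_(d : {ffun 'I_n -> 'I_B.+1} | [forall i, (d i %| k i)%N])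
     \prod_(i < n) dconv (f i) (@moebius R) (d i).
Proof.
move=> k_bounded.
rewrite (eq_bigr (fun i => \sum_(d <- divisors (k i)) dconv (f i) (@moebius R) d)).
  rewrite (prod_sum_divisors _ _ k_bounded); apply: eq_bigl => d.
  by apply: eq_forallb => i; rewrite andbT.
by move=> i _; rewrite moebius_inversion //; case/andP: (k_bounded i).
Qed.

Lemma sum_pow_multiples (R : comPzSemiRingType) q n r : (0 < q)%N -> (0 < r)%N ->
  \sum_(1 <= j < n.+1 | (q %| j)%N) (j%:R : R) ^+ r =
  q%:R ^+ r * \sum_(0 <= t < (n %/ q).+1) t%:R ^+ r.
Proof.
move=> q_gt0 r_gt0; rewrite big_distrr /=.
rewrite [RHS](eq_bigr (fun t => (q * t)%N%:R ^+ r)) => [|t _]; last by rewrite natrM exprMn.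
rewrite -(@big_nat_dvdn _ q n (fun j => (j%:R : R) ^+ r)) // [RHS]big_ltn_cond //.
by rewrite dvdn0 expr0n gtn_eqF // add0r.
Qed.

Lemma sum_pow_prod_divisors (R : comPzSemiRingType) n B N a r (k : 'I_n -> nat)
    (g : 'I_n -> nat -> R) :
  (0 < r)%N -> (forall i, 0 < k i <= B)%N ->
  \sum_(1 <= j < N.+1)
     (j%:R ^+ r * \prod_(i < n) \sum_(d <- divisors (k i) | (d ^ a %| j)%N) g i d) =
  \sum_(d : {ffun 'I_n -> 'I_B.+1} | [forall i, (d i %| k i)%N])
     \prod_(i < n) g i (d i) * ((lcm_fam (fun i => d i : nat) ^ a)%:R ^+ r *
       \sum_(0 <= t < (N %/ lcm_fam (fun i => d i : nat) ^ a).+1) t%:R ^+ r).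
Proof.
move=> r_gt0 k_bounded.
have split_cond j (d : {ffun 'I_n -> 'I_B.+1}) :
    [forall i, (d i %| k i)%N && (d i ^ a %| j)%N] =
    [forall i, (d i %| k i)%N] && (lcm_fam (fun i => d i : nat) ^ a %| j)%N.
  rewrite lcm_fam_exp dvdn_lcm_fam; apply/forallP/andP => [dj|[/forallP d1 /forallP d2] i].
    by split; apply/forallP => i; case/andP: (dj i).
  by rewrite d1 d2.
under eq_bigr do
  rewrite (prod_sum_divisors _ _ k_bounded) (eq_bigl _ _ (split_cond _)) big_mkcondr big_distrr /=.
rewrite exchange_big /=; apply: eq_bigr => d /forallP d_dvd.
have L_gt0 : (0 < lcm_fam (fun i => d i : nat))%N.
  by apply: lcm_fam_gt0 => i; apply: dvdn_gt0 (d_dvd i); case/andP: (k_bounded i).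
rewrite -sum_pow_multiples ?expn_gt0 ?L_gt0 // big_distrr [RHS]big_mkcond /=.
by apply: eq_bigr => j _; case: ifP; rewrite ?mulr0 // mulrC.
Qed.

Lemma size_bern_seq n : size (bern_seq n) = n.
Proof. by elim: n => //= n IHn; rewrite size_rcons IHn. Qed.

Lemma nth_bern_seq n m : (m < n)%N -> nth 0 (bern_seq n) m = bernoulli m.
Proof.
elim: n => // n IHn; rewrite ltnS leq_eqVlt => /orP[/eqP-> //| lt_mn].
by rewrite /= nth_rcons size_bern_seq lt_mn IHn.
Qed.

Lemma bernoulliE m : bernoulli m =
  if m == 0%N then 1 else - (m.+1%:R)^-1 * \sum_(k < m) 'C(m.+1, k)%:R * bernoulli k.
Proof.
rewrite /bernoulli /= nth_rcons size_bern_seq ltnn eqxx /bern_next size_bern_seq.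
by case: eqP => // _; congr (_ * _); apply: eq_bigr => k _; rewrite nth_bern_seq.
Qed.

Lemma sum_bernoulli M : \sum_(k < M) 'C(M, k)%:R * bernoulli k = (M == 1%N)%:R.
Proof.
case: M => [|m]; first by rewrite big_ord0.
rewrite big_ord_recr /= binSn; case: m => [|m]; first by rewrite big_ord0 add0r bernoulliE.
rewrite [bernoulli m.+1]bernoulliE /=.
have m2_neq0 : (m.+2%:R : rat) != 0 by rewrite pnatr_eq0.
by field; rewrite -natrD pnatr_eq0.
Qed.

Lemma exprz_double_pred (F : fieldType) (z : F) (a m : nat) : z != 0 ->
  z ^ (a%:Z * (2 * m%:Z - 1)) = (z ^+ a) ^+ (2 * m) / z ^+ a.
Proof.
move=> z_neq0; have -> : a%:Z * (2 * m%:Z - 1) = (a * (2 * m))%N%:Z - a%:Z.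
  by rewrite !PoszM; ring.
by rewrite expfzDr // -exprnN -exprnP exprM.
Qed.

Lemma expr_ratio_shift (F : fieldType) (X Y : F) r j : X != 0 -> Y != 0 -> (j <= r)%N ->
  (X ^+ r)^-1 * (Y ^+ r * (X / Y) ^+ (r.+1 - j)) = (Y ^+ j / Y) / (X ^+ j / X).
Proof.
move=> X_neq0 Y_neq0 le_jr; set e := (r.+1 - j)%N.
have pow_r (Z : F) : Z != 0 -> Z ^+ r = Z ^+ e * Z ^+ j / Z.
  by move=> Z_neq0; rewrite -exprD subnK ?(leqW le_jr) // exprSr (mulfK Z_neq0).
rewrite !pow_r // expr_div_n; field.
by rewrite !expf_neq0 ?X_neq0 ?Y_neq0.
Qed.

Section Faulhaber.
Variable R : numFieldType.
Local Notation B m := (ratr (bernoulli m) : R).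

Lemma sum_bin_widen M n (G : nat -> R) : (M <= n)%N ->
  \sum_(0 <= j < n.+1) 'C(M, j)%:R * G j = \sum_(0 <= j < M.+1) 'C(M, j)%:R * G j.
Proof.
move=> le_Mn; rewrite (@big_cat_nat _ _ _ M.+1) //= [X in _ + X]big_nat_cond.
by rewrite [X in _ + X]big1 ?addr0 // => j /andP[/andP[/bin_small-> _] _]; rewrite mul0r.
Qed.

Lemma sum_bernoulli_nat M : \sum_(0 <= m < M.+1) 'C(M, m)%:R * B m = B M + (M == 1%N)%:R.
Proof.
rewrite big_nat_recr //= binn mul1r addrC big_mkord.
congr (_ + _); have := congr1 (fun q => ratr q : R) (sum_bernoulli M).
rewrite rmorph_sum rmorph_nat => <-.
by apply: eq_bigr => k _; rewrite rmorphM rmorph_nat.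
Qed.

Definition bernoulli_poly n (x : R) := \sum_(0 <= m < n.+1) 'C(n, m)%:R * B m * x ^+ (n - m).

Lemma bernoulli_polyE n x :
  bernoulli_poly n x = \sum_(0 <= j < n.+1) 'C(n, j)%:R * x ^+ j * B (n - j).
Proof.
rewrite /bernoulli_poly big_nat_rev; apply: eq_big_nat => j /andP[_ lt_jn].
by rewrite add0n subSS bin_sub // subKn // mulrAC.
Qed.

Lemma bernoulli_poly_addr1 n x : bernoulli_poly n (x + 1) =
  \sum_(0 <= j < n.+1) 'C(n, j)%:R * x ^+ j * (B (n - j) + (n - j == 1)%N%:R).
Proof.
have expand m : (0 <= m < n.+1)%N -> 'C(n, m)%:R * B m * (x + 1) ^+ (n - m) =
    \sum_(0 <= j < n.+1) 'C(n, m)%:R * B m * ('C(n - m, j)%:R * x ^+ j).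
  case/andP=> _ lt_mn; rewrite -big_distrr /= exprD1n (@sum_bin_widen (n - m)) ?leq_subr //.
  by rewrite big_mkord; congr (_ * _); apply: eq_bigr => i _; rewrite mulr_natl.
rewrite /bernoulli_poly (eq_big_nat _ _ expand).
rewrite exchange_big /=; apply: eq_big_nat => j /andP[_ lt_jn].
rewrite -sum_bernoulli_nat -(@sum_bin_widen (n - j) n) ?leq_subr // big_distrr /=.
apply: eq_bigr => m _; have := congr1 (fun z : nat => z%:R : R) (@bin_mul_subC n m j lt_jn).
rewrite !natrM => binC.
by transitivity ('C(n, m)%:R * 'C(n - m, j)%:R * B m * x ^+ j); [ring | rewrite binC; ring].
Qed.

Lemma bernoulli_poly_diff n x :
  bernoulli_poly n.+1 (x + 1) - bernoulli_poly n.+1 x = n.+1%:R * x ^+ n.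
Proof.
rewrite bernoulli_poly_addr1 bernoulli_polyE -sumrB.
under eq_bigr do rewrite mulrDr addrC addKr.
rewrite big_nat_recr //= subnn mulr0 addr0 big_nat_recr //= subSnn binSn mulr1.
rewrite big_nat_cond big1 ?add0r // => j /andP[/andP[_ lt_jn] _].
rewrite (_ : (n.+1 - j == 1)%N = false) ?mulr0 //.
by apply/negbTE; rewrite -(eqn_add2r j) subnK; lia.
Qed.

Definition faulhaber_poly n (x : R) := \sum_(0 <= m < n) 'C(n, m)%:R * B m * x ^+ (n - m).

Lemma faulhaber_polyE n x : faulhaber_poly n x = bernoulli_poly n x - B n.
Proof. by rewrite /bernoulli_poly big_nat_recr //= binn subnn mul1r mulr1 addrK. Qed.

Lemma faulhaber_poly0 n : faulhaber_poly n 0 = 0.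
Proof.
rewrite /faulhaber_poly big_nat_cond big1 // => m /andP[/andP[_ lt_mn] _].
by rewrite expr0n subn_eq0 leqNgt lt_mn mulr0.
Qed.

Lemma faulhaber_poly_diff n x :
  faulhaber_poly n.+1 (x + 1) - faulhaber_poly n.+1 x = n.+1%:R * x ^+ n.
Proof. by rewrite !faulhaber_polyE opprB addrA addrNK bernoulli_poly_diff. Qed.

Lemma faulhaber_poly_nat r N :
  faulhaber_poly r.+1 N%:R = r.+1%:R * \sum_(0 <= t < N) t%:R ^+ r.
Proof.
elim: N => [|N IHN]; first by rewrite big_geq // mulr0 faulhaber_poly0.
apply/eqP; rewrite big_nat_recr //= mulrDr -IHN -subr_eq0 -natr1.
by rewrite opprD addrA faulhaber_poly_diff subrr.
Qed.

Lemma faulhaber_poly_Nnat r N : (0 < r)%N ->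
  faulhaber_poly r.+1 (- N%:R) = (-1) ^+ r.+1 * (r.+1%:R * \sum_(0 <= t < N.+1) t%:R ^+ r).
Proof.
move=> r_gt0; elim: N => [|N IHN].
  by rewrite oppr0 faulhaber_poly0 big_nat1 expr0n gtn_eqF // !mulr0.
have := faulhaber_poly_diff r (- N.+1%:R); rewrite -natr1 opprD addrNK IHN.
move/eqP; rewrite subr_eq addrC -subr_eq => /eqP <-.
rewrite (big_nat_recr N.+1) //= -opprD natr1 (exprNn (N.+1%:R : R)) exprS; ring.
Qed.

(* Comparing x with -x cancels the odd-index terms, so the odd Bernoulli numbers (which vanish
   beyond B_1) never have to be computed. *)
Lemma faulhaber_poly_even n x :
  faulhaber_poly n x + (-1) ^+ n * faulhaber_poly n (- x) =
  2 * \sum_(0 <= m < n | ~~ odd m) 'C(n, m)%:R * B m * x ^+ (n - m).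
Proof.
rewrite /faulhaber_poly big_distrr -big_split [RHS]big_distrr [RHS]big_mkcond /=.
apply: eq_big_nat => m /andP[_ lt_mn].
have sign : (-1) ^+ n * (-1) ^+ (n - m) = (-1) ^+ m :> R.
  by rewrite -exprD -signr_odd oddD oddB ?(ltnW lt_mn) // addbA addbb signr_odd.
have -> : (-1) ^+ n * ('C(n, m)%:R * B m * (- x) ^+ (n - m)) =
          (-1) ^+ m * ('C(n, m)%:R * B m * x ^+ (n - m)).
  by rewrite (exprNn x) -sign; ring.
rewrite -signr_odd; case: (odd m) => /=.
  by rewrite expr1 mulN1r subrr.
by rewrite expr0; ring.
Qed.

Theorem faulhaber r N : (0 < r)%N ->
  \sum_(0 <= t < N.+1) t%:R ^+ r = N%:R ^+ r / 2 + (r.+1%:R)^-1 *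
    \sum_(m < r./2.+1) 'C(r.+1, 2 * m)%:R * B (2 * m) * N%:R ^+ (r.+1 - 2 * m).
Proof.
move=> r_gt0; set S := \sum_(0 <= t < N.+1) _; set E := \sum_(m < r./2.+1) _.
have evenE : \sum_(0 <= m < r.+1 | ~~ odd m) 'C(r.+1, m)%:R * B m * N%:R ^+ (r.+1 - m) = E.
  by under eq_bigl do rewrite -dvdn2; rewrite big_nat_dvdn // divn2 big_mkord.
have := faulhaber_poly_even r.+1 N%:R.
rewrite faulhaber_poly_nat faulhaber_poly_Nnat // evenE mulrA -expr2 sqrr_sign mul1r.
rewrite -/S (_ : \sum_(0 <= t < N) _ = S - N%:R ^+ r); last by rewrite /S big_nat_recr //= addrK.
have two_neq0 : (2 : R) != 0 by rewrite pnatr_eq0.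
by move=> twoE; rewrite -[E](mulKf two_neq0) -twoE; field; rewrite -mulrS pnatr_eq0.
Qed.

Lemma faulhaber_scaled (X Y : R) N r :
  X != 0 -> Y != 0 -> N%:R = X / Y -> (0 < r)%N ->
  (X ^+ r)^-1 * (Y ^+ r * \sum_(0 <= t < N.+1) t%:R ^+ r) =
  2^-1 + (r.+1%:R)^-1 * \sum_(m < r./2.+1)
    'C(r.+1, 2 * m)%:R * B (2 * m) * ((Y ^+ (2 * m) / Y) / (X ^+ (2 * m) / X)).
Proof.
move=> X_neq0 Y_neq0 N_def r_gt0; rewrite faulhaber // N_def !mulrDr.
congr (_ + _); first by rewrite expr_div_n; field; rewrite !expf_neq0.
rewrite !big_distrr; apply: eq_bigr => m _ /=.
have le_2m_r : (2 * m <= r)%N by have := ltn_ord m; rewrite ltnS -leq_double -!muln2; lia.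
by rewrite -(expr_ratio_shift X_neq0 Y_neq0 le_2m_r); ring.
Qed.

End Faulhaber.

Theorem mainTheorem3 (C : numClosedFieldType) (a n r : nat)
  (k : 'I_n -> nat) (f : 'I_n -> nat -> C)
  (ha : (0 < a)%N) (hn : (0 < n)%N) (hr : (0 < r)%N)
  (hk : forall i, (0 < k i)%N) :
  let K := lcm_fam k in
  ((K ^ (a * r))%N%:R)^-1 *
    \sum_(1 <= j < (K ^ a).+1)
       (j%:R ^+ r * \prod_(i < n)
          \sum_(d <- divisors (k i) | (d ^ a %| j)%N) dconv (f i) (@moebius C) d)
  = 2%:R^-1 * \prod_(i < n) f i (k i)
    + (r.+1%:R)^-1 *
      \sum_(m < r./2.+1)
        (('C(r.+1, 2 * m))%:R * ratr (bernoulli (2 * m))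
          / (K%:R ^ ((a%:Z) * (2 * m%:Z - 1)))
          * \sum_(d : {ffun 'I_n -> 'I_K.+1} | [forall i, ((d i : nat) %| k i)%N])
              ((lcm_fam (fun i => (d i : nat)))%:R ^ ((a%:Z) * (2 * m%:Z - 1))
               * \prod_(i < n) dconv (f i) (@moebius C) (d i))).
Proof.
move=> K; have K_gt0 : (0 < K)%N := lcm_fam_gt0 hk.
have k_bounded i : (0 < k i <= K)%N by rewrite hk dvdn_leq ?dvdn_lcm_fam_l.
have L_dvd_K (d : {ffun 'I_n -> 'I_K.+1}) :
  [forall i, (d i %| k i)%N] -> (lcm_fam (fun i => d i : nat) %| K)%N.
  by move/forallP; apply: lcm_fam_dvd.
have L_neq0 (d : {ffun 'I_n -> 'I_K.+1}) :
  [forall i, (d i %| k i)%N] -> (lcm_fam (fun i => d i : nat))%:R != 0 :> C.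
  by move/L_dvd_K/(dvdn_gt0 K_gt0); rewrite pnatr_eq0 -lt0n.
rewrite natrX exprM (sum_pow_prod_divisors _ _ _ hr k_bounded).
rewrite (prod_moebius_inversion _ k_bounded).
set D := fun d : {ffun 'I_n -> 'I_K.+1} => [forall i, ((d i : nat) %| k i)%N].
set L := fun d : {ffun 'I_n -> 'I_K.+1} => lcm_fam (fun i => (d i : nat)).
set P := fun d : {ffun 'I_n -> 'I_K.+1} => \prod_(i < n) dconv (f i) (@moebius C) (d i).
have RHS_sum : \sum_(m < r./2.+1)
    ('C(r.+1, 2 * m)%:R * ratr (bernoulli (2 * m)) / (K%:R ^ (a%:Z * (2 * m%:Z - 1)))
     * \sum_(d | D d) ((L d)%:R ^ (a%:Z * (2 * m%:Z - 1)) * P d))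
  = \sum_(d | D d) P d * \sum_(m < r./2.+1) 'C(r.+1, 2 * m)%:R * ratr (bernoulli (2 * m))
      * (((L d)%:R ^+ a ^+ (2 * m) / (L d)%:R ^+ a) / (K%:R ^+ a ^+ (2 * m) / K%:R ^+ a)).
  under eq_bigr do rewrite big_distrr.
  rewrite exchange_big /=; apply: eq_bigr => d Dd; rewrite big_distrr; apply: eq_bigr => m _ /=.
  by rewrite !exprz_double_pred ?L_neq0 ?pnatr_eq0 -?lt0n //; ring.
rewrite RHS_sum [LHS]big_distrr [X in X + _]big_distrr [X in _ + X]big_distrr -big_split /=.
apply: eq_bigr => d Dd; rewrite (mulrCA _ (P d)) natrX.
rewrite faulhaber_scaled ?expf_neq0 ?L_neq0 ?pnatr_eq0 -?lt0n //; first by rewrite /P /L /=; ring.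
by rewrite natr_div ?natrX ?dvdn_exp2r ?L_dvd_K // unitfE expf_neq0 ?L_neq0.
Qed.
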